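(* Let $G$ be a group, $c\in G$, and $k_1,\dots,k_n$ integers with $k=\gcd(k_1,\dots,k_n)$. If the set $\{(x_1,\dots,x_n)\in G^n:x_1^{k_1}\cdots x_n^{k_n}=c\}$ is $2$-large in $G^n$, then $z^k=1$ for all $z\in Z(G)$.
   Context: A subset $X$ of a group $K$ is $2$-large in $K$ if $aX\cap bX\ne\emptyset$ for all $a,b\in K$. *)

From mathcomp Require Import all_boot all_algebra.
Set Implicit Arguments. Unset Strict Implicit. Unset Printing Implicit Defensive.

Local Open Scope group_scope.

(* Integer power x^m in a group: x^n for m = n >= 0, (x^(n+1))^-1 for m = -(n+1). *)
Definition zexpg (G : groupType) (x : G) (m : int) : G :=
  match m with
  | Posz n => x ^+ n
  | Negz n => (x ^+ n.+1)^-1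
  end.

(* The direct power G^n, elements as functions 'I_n -> G, with the
   componentwise product. *)
Definition tmul (G : groupType) (n : nat) (a x : 'I_n -> G) : 'I_n -> G :=
  fun i => a i * x i.

(* X is 2-large in G^n: aX meets bX for all a, b in G^n, i.e. there are
   x, y in X with a x = b y. *)
Definition two_large (G : groupType) (n : nat) (X : ('I_n -> G) -> Prop) : Prop :=
  forall a b : 'I_n -> G, exists x y, X x /\ X y /\ tmul a x = tmul b y.

Definition in_center (G : groupType) (z : G) : Prop := forall g : G, z * g = g * z.

Definition word_val (G : groupType) (n : nat) (k : 'I_n -> int) (x : 'I_n -> G) : G :=
  \big[*%g/1]_(i < n) zexpg (x i) (k i).

(* gcd(k_1, ..., k_n) (nonnegative; 0 for n = 0 or all k_i = 0). *)
Definition gcd_list (n : nat) (k : 'I_n -> int) : int := \big[gcdz/0%R]_(i < n) k i.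

(* Translating a solution x by the element of G^n that is z in coordinate j
   and 1 elsewhere multiplies the word by z^(k_j) when z is central.  Applying
   2-largeness to this translate and the identity gives two solutions whose
   words differ by exactly z^(k_j), so z^(k_j) = 1 for every j, and Bezout
   passes this on to the gcd. *)
From mathcomp Require Import all_boot all_algebra.

Set Implicit Arguments.
Unset Strict Implicit.
Unset Printing Implicit Defensive.

Local Open Scope group_scope.

Section IntegerPowers.

Variable G : groupType.
Implicit Types x y z : G.

Lemma zexpg_eq1 z m : zexpg z m = 1 <-> z ^+ `|m|%N = 1.
Proof.
case: m => [n|n] //=; split=> [/eqP|->]; last exact: invg1.
by rewrite invg_eq1 => /eqP.
Qed.

Lemma zexpg1n m : zexpg (1 : G) m = 1.
Proof. by case: m => n /=; rewrite expg1n ?invg1. Qed.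

Lemma commute_zexpg x y m : commute x y -> commute x (zexpg y m).
Proof. by case: m => n cxy /=; [apply: commuteX | apply/commuteV/commuteX]. Qed.

Lemma zexpgMn x y m : commute x y -> zexpg (x * y) m = zexpg x m * zexpg y m.
Proof.
case: m => n cxy /=; rewrite expgMn //.
rewrite invgM; apply/commute_sym/commuteV/commute_sym/commuteV.
exact: commuteX2.
Qed.

Lemma expg_gcdn_eq1 x a b : x ^+ a = 1 -> x ^+ b = 1 -> x ^+ gcdn a b = 1.
Proof.
move=> xa1 xb1; have [->|a_gt0] := posnP a; first by rewrite gcd0n.
have [u _ /dvdnP[q gcd_def]] := Bezoutl b a_gt0.
have : x ^+ (gcdn a b + u * b) = 1 by rewrite gcd_def mulnC expgnA xa1 expg1n.
by rewrite expgnDr mulnC expgnA xb1 expg1n mulg1.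
Qed.

Lemma zexpg_gcd_list_eq1 n (k : 'I_n -> int) z :
  (forall i, zexpg z (k i) = 1) -> zexpg z (gcd_list k) = 1.
Proof.
move=> zk1; apply/zexpg_eq1; apply: (big_ind (fun m : int => z ^+ `|m|%N = 1)).
- exact: expg0.
- by move=> a b; rewrite /gcdz; apply: expg_gcdn_eq1.
- by move=> i _; apply/zexpg_eq1.
Qed.

End IntegerPowers.

Section TranslationByCentralElement.

Variables (G : groupType) (n : nat) (k : 'I_n -> int).

Definition delta_at (j : 'I_n) (z : G) : 'I_n -> G :=
  fun i => if i == j then z else 1.

Lemma word_val_tmul_delta_at j z x : in_center z ->
  word_val k (tmul (delta_at j z) x) = zexpg z (k j) * word_val k x.
Proof.
move=> zZ; have central_at i : in_center (delta_at j z i).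
  by rewrite /delta_at; case: eqP => // _ g; rewrite mul1g mulg1.
rewrite /word_val /tmul.
under eq_bigr => i _ do rewrite (zexpgMn _ (central_at i (x i))).
rewrite prodgM_commute; last first.
  by move=> i l _ _; apply/commute_sym/commute_zexpg/commute_sym/central_at.
congr (_ * _); rewrite -(@big_pred1_eq G 1 *%g _ j (fun i => zexpg z (k i))).
rewrite big_mkcond; apply: eq_bigr => i _; rewrite /delta_at.
by case: eqP => // _; rewrite zexpg1n.
Qed.

Lemma two_large_center_zexpg_eq1 (c : G) j (z : G) :
  two_large (fun x => word_val k x = c) -> in_center z -> zexpg z (k j) = 1.
Proof.
move=> large zZ; have [x [y [wx [wy xy]]]] := large (delta_at j z) (fun=> 1).
have : word_val k (tmul (delta_at j z) x) = c.
  by rewrite xy -wy; apply: eq_bigr => i _; rewrite /tmul mul1g.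
rewrite word_val_tmul_delta_at // wx => zkc.
by apply: (mulIg c); rewrite mul1g zkc.
Qed.

End TranslationByCentralElement.

Theorem corollary3p10 (G : groupType) (c : G) (n : nat) (k : 'I_n -> int) :
  two_large (fun x : 'I_n -> G => word_val k x = c) ->
  forall z : G, in_center z -> zexpg z (gcd_list k) = 1%g.
Proof.
move=> large z zZ; apply: zexpg_gcd_list_eq1 => j.
exact: two_large_center_zexpg_eq1 large zZ.
Qed.
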